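(* Let $F$ be a face of $V_O$ and let $\lambda\ne\mu$ be two elements of $\Xi_1$ such that $F\subseteq H_\lambda\cap H_\mu$. Then $\mathrm{supp}(\lambda)$ and $\mathrm{supp}(\mu)$ are consistent in their orientations: there is no oriented edge $e\in\mathbb E$ with $e\in\mathrm{supp}(\lambda)$ and $\bar e\in\mathrm{supp}(\mu)$.
   Context: $G=(V,E)$ is a finite connected graph, possibly with parallel edges and loops; $\mathbb E$ is the set of oriented edges ($e$ and its reverse $\bar e$). Real $1$-chains $x:\mathbb E\to\mathbb R$ satisfy $x_{\bar e}=-x_e$; $\langle x,y\rangle=\sum_{e\in E}x_ey_e$, $q(x)=\langle x,x\rangle$. A flow satisfies $\sum_{e\text{ with tail }v}x_e=0$ at every vertex $v$; $H$ is the space of real flows and $\Lambda$ the lattice of integer flows. $V_O=\{x\in H: q(x)\le q(x-\mu)\ \forall\mu\in\Lambda\}$ is the Voronoi cell of the origin. For a flow $x$, $\mathrm{supp}(x)=\{e\in\mathbb E: x_e>0\}$. A circuit is an orientation of a cycle as a directed cycle; $x^C_e=1$ if $e\in C$, $-1$ if $\bar e\in C$, $0$ otherwise. $\Xi_1=\{x^C: C\text{ a circuit}\}$. For $\lambda\in\Xi_1$, $H_\lambda=\{x\in H: 2\langle x,\lambda\rangle=q(\lambda)\}$. *)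

From HB Require Import structures.
From mathcomp Require Import all_boot all_order all_algebra.
Set Implicit Arguments. Unset Strict Implicit. Unset Printing Implicit Defensive.
Import Order.TTheory GRing.Theory Num.Theory.
Local Open Scope ring_scope.

(* A finite graph with vertex set V and edge set E; every edge e has a
   (reference) tail [src e] and head [tgt e].  Parallel edges and loops
   are allowed (src/tgt are arbitrary). *)

(* Oriented edges: (e, true) is e itself, (e, false) is its reverse ē. *)
Definition oedge (E : finType) := (E * bool)%type.
Definition orev (E : finType) (o : oedge E) : oedge E := (o.1, ~~ o.2).
Definition otail (V E : finType) (src tgt : E -> V) (o : oedge E) : V :=
  if o.2 then src o.1 else tgt o.1.
Definition ohead (V E : finType) (src tgt : E -> V) (o : oedge E) : V :=
  if o.2 then tgt o.1 else src o.1.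

Definition adjacent (V E : finType) (src tgt : E -> V) : rel V :=
  fun u v => [exists e : E, ((src e == u) && (tgt e == v)) || ((src e == v) && (tgt e == u))].
Definition connected_graph (V E : finType) (src tgt : E -> V) : Prop :=
  forall u v : V, connect (adjacent src tgt) u v.

(* Real 1-chains: x is given by its values on the edges e; x_{ē} = - x_e. *)
Definition chain (R : realFieldType) (E : finType) := {ffun E -> R}.
Definition oval (R : realFieldType) (E : finType) (x : chain R E) (o : oedge E) : R :=
  if o.2 then x o.1 else - x o.1.

Definition inner (R : realFieldType) (E : finType) (x y : chain R E) : R :=
  \sum_(e : E) x e * y e.
Definition qf (R : realFieldType) (E : finType) (x : chain R E) : R := inner x x.

Definition is_flow (R : realFieldType) (V E : finType) (src tgt : E -> V)
  (x : chain R E) : Prop :=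
  forall v : V, \sum_(o : oedge E | otail src tgt o == v) oval x o = 0.

Definition is_int_flow (R : realFieldType) (V E : finType) (src tgt : E -> V)
  (x : chain R E) : Prop :=
  is_flow src tgt x /\ exists z : E -> int, forall e, x e = (z e)%:~R.

Definition voronoi (R : realFieldType) (V E : finType) (src tgt : E -> V)
  (x : chain R E) : Prop :=
  is_flow src tgt x /\
  forall mu : chain R E, is_int_flow src tgt mu -> qf x <= qf (x - mu).

(* (Nonempty) face of the polytope V_O: the intersection of V_O with a
   supporting hyperplane (the whole V_O being allowed, via a = 0, b = 0). *)
Definition is_face (R : realFieldType) (V E : finType) (src tgt : E -> V)
  (F : chain R E -> Prop) : Prop :=
  (exists x, F x) /\
  exists (a : chain R E) (b : R),
    (forall x, voronoi src tgt x -> inner a x <= b) /\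
    (forall x, F x <-> (voronoi src tgt x /\ inner a x = b)).

Definition is_circuit (V E : finType) (src tgt : E -> V) (s : seq (oedge E)) : bool :=
  [&& s != [::], uniq (map fst s), uniq (map (otail src tgt) s)
    & cycle (fun o o' => ohead src tgt o == otail src tgt o') s].

Definition circuit_chain (R : realFieldType) (E : finType) (s : seq (oedge E)) : chain R E :=
  [ffun e => if (e, true) \in s then 1 else if (e, false) \in s then -1 else 0].

Definition in_Xi1 (R : realFieldType) (V E : finType) (src tgt : E -> V)
  (lam : chain R E) : Prop :=
  exists s, is_circuit src tgt s /\ lam = circuit_chain R s.

Definition in_Hlam (R : realFieldType) (V E : finType) (src tgt : E -> V)
  (lam x : chain R E) : Prop :=
  is_flow src tgt x /\ 2 * inner x lam = qf lam.

Definition in_supp (R : realFieldType) (E : finType) (x : chain R E) (o : oedge E) : Prop :=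
  0 < oval x o.

From Pilot Require Import Defs.
From mathcomp Require Import all_boot all_order all_algebra.
From mathcomp Require Import zify lra.
Set Implicit Arguments. Unset Strict Implicit. Unset Printing Implicit Defensive.
Import Order.TTheory GRing.Theory Num.Theory.
Local Open Scope ring_scope.

(* For x in the Voronoi cell and any integer flow z, 2<x, z> <= |z|_1: peel off
   a directed circuit C of the positive support of z (so |z|_1 = |C| + |z - C|_1)
   and use 2<x, x^C> <= q(x^C) = |C|, which is Voronoi minimality against x^C.
   A point x of F satisfies 2<x, lam> = |lam| and 2<x, mu> = |mu|.  If lam and mu
   traversed an edge in opposite directions, the integer flow lam + mu would have
   |lam + mu|_1 <= |lam| + |mu| - 2 < 2<x, lam + mu>, a contradiction. *)

Lemma orevK (E : finType) : involutive (@orev E).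
Proof. by case=> e b; rewrite /orev negbK. Qed.

Lemma otail_orev (V E : finType) (src tgt : E -> V) (o : oedge E) :
  otail src tgt (orev o) = Defs.ohead src tgt o.
Proof. by case: o => e []. Qed.

Lemma absz_opposite_addr (a b : int) :
  a * b < 0 -> (`|(a + b)%R| + 2 <= `|a| + `|b|)%N.
Proof. nia. Qed.

Lemma sum_mem_count (T : finType) (P : pred T) (s : seq T) : uniq s ->
  \sum_(t | P t) (t \in s)%:Z = (count P s)%:Z.
Proof.
move=> s_uniq; rewrite -sum1_count (big_morph Posz PoszD erefl).
rewrite [in RHS]big_mkcond (big_uniq _ s_uniq) big_mkcond /= [in RHS]big_mkcond /=.
by apply: eq_bigr => t _; case: (P t); case: (t \in s).
Qed.

Lemma path_map_rcons (T : Type) (U : eqType) (h t : T -> U) x s y :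
  path (fun a b => h a == t b) x (rcons s y) -> h x :: map h s = map t (rcons s y).
Proof.
elim: s x => [|x' s IHs] x /=; first by rewrite andbT => /eqP->.
by case/andP=> /eqP-> /IHs->.
Qed.

Lemma cycle_map_rot (T : Type) (U : eqType) (h t : T -> U) (s : seq T) :
  cycle (fun a b => h a == t b) s -> map h s = rot 1 (map t s).
Proof. by case: s => // x s; rewrite rot1_cons -map_rcons; apply: path_map_rcons. Qed.

Lemma map_uniq_inj_in (T U : eqType) (f : T -> U) (s : seq T) :
  uniq (map f s) -> {in s &, injective f}.
Proof.
elim: s => //= x s IHs /andP[fx_notin fs_uniq] y y'.
rewrite !inE => /predU1P[->|ys] /predU1P[->|y's] // fyy'.
- by move: fx_notin; rewrite fyy' map_f.
- by move: fx_notin; rewrite -fyy' map_f.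
- exact: IHs.
Qed.

Lemma exists_fcycle_orbit (T : finType) (f : T -> T) (x : T) :
  exists n, fcycle f (orbit f (iter n f x)).
Proof.
have /trajectP[i lt_i_ord iter_ord] := looping_order f x.
exists i; apply/(orbitPcycle 0 3); exists (order f x - i).-1.
by rewrite prednK ?subn_gt0 // -iterD subnK ?iter_ord // ltnW.
Qed.

Section IntegerChains.
Variables (V E : finType) (src tgt : E -> V).
Implicit Types (z c : {ffun E -> int}) (s : seq (oedge E)) (o : oedge E).

(* [chain] needs a field of scalars, so integer chains are a separate copy of
   the real notions, related to them by [chain_of_ichain] below. *)

Definition ioval z o : int := if o.2 then z o.1 else - z o.1.

Definition is_iflow z : Prop :=
  forall v : V, \sum_(o | otail src tgt o == v) ioval z o = 0.

Definition l1norm z : nat := \sum_e `|z e|.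

Definition circuit_ichain s : {ffun E -> int} :=
  [ffun e => if (e, true) \in s then 1 else if (e, false) \in s then -1 else 0].

Lemma iovalD z c o : ioval (z + c) o = ioval z o + ioval c o.
Proof. by rewrite /ioval !ffunE; case: o.2; rewrite ?opprD. Qed.

Lemma iovalN z o : ioval (- z) o = - ioval z o.
Proof. by rewrite /ioval !ffunE; case: o.2. Qed.

Lemma ioval_orev z o : ioval z (orev o) = - ioval z o.
Proof. by case: o => e []; rewrite /ioval /= ?opprK. Qed.

Lemma iovalM z c o : ioval z o * ioval c o = z o.1 * c o.1.
Proof. by rewrite /ioval; case: o.2; rewrite ?mulrNN. Qed.

Lemma is_iflowD z c : is_iflow z -> is_iflow c -> is_iflow (z + c).
Proof.
by move=> fz fc v; under eq_bigr do rewrite iovalD; rewrite big_split /= fz fc addr0.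
Qed.

Lemma is_iflowN z : is_iflow z -> is_iflow (- z).
Proof. by move=> fz v; under eq_bigr do rewrite iovalN; rewrite sumrN fz oppr0. Qed.

Lemma l1norm_opposite z c e :
  z e * c e < 0 -> (l1norm (z + c)%R + 2 <= l1norm z + l1norm c)%N.
Proof.
move=> zc_neg; rewrite /l1norm -big_split /= (bigD1 e) //= [X in (_ <= X)%N](bigD1 e) //=.
rewrite addnAC ffunE leq_add ?absz_opposite_addr //.
by apply: leq_sum => e' _; rewrite ffunE; move: (z e') (c e') => a b; lia.
Qed.

Lemma ioval_circuit s o : uniq (map fst s) ->
  ioval (circuit_ichain s) o = (o \in s)%:Z - (orev o \in s)%:Z.
Proof.
move=> /map_uniq_inj_in fst_inj; case: o => e b; rewrite /ioval /orev ffunE /=.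
case et: ((e, true) \in s); case ef: ((e, false) \in s); case: b; rewrite /= et ef //.
all: by have := fst_inj _ _ et ef erefl.
Qed.

Lemma circuit_iflow s : is_circuit src tgt s -> is_iflow (circuit_ichain s).
Proof.
case/and4P=> _ fst_uniq _ s_cycle v; have s_uniq := map_uniq fst_uniq.
under eq_bigr do rewrite ioval_circuit //.
rewrite sumrB sum_mem_count //.
rewrite (reindex_inj (inv_inj (@orevK E))) /=.
under eq_big => [o | o _] do [rewrite otail_orev | rewrite orevK].
rewrite sum_mem_count //; apply/eqP; rewrite subr_eq0; apply/eqP; congr Posz.
have rot_tails : perm_eq (rot 1 (map (otail src tgt) s)) (map (otail src tgt) s).
  by rewrite perm_rot.
have := permP rot_tails (pred1 v).
by rewrite -(cycle_map_rot s_cycle) !count_map => /esym.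
Qed.

Lemma iflow_out_arc z o : is_iflow z -> 0 < ioval z o ->
  exists2 o', 0 < ioval z o' & otail src tgt o' = Defs.ohead src tgt o.
Proof.
move=> z_flow o_pos; set v := Defs.ohead src tgt o.
case: (pickP (fun o' => (0 < ioval z o') && (otail src tgt o' == v))).
  by move=> o' /andP[o'_pos /eqP o'_tail]; exists o'.
move=> no_out; have := z_flow v.
rewrite (bigD1 (orev o)) ?otail_orev //= ioval_orev.
have : \sum_(o' | (otail src tgt o' == v) && (o' != orev o)) ioval z o' <= 0.
  apply: sumr_le0 => o' /andP[o'_tail _].
  by have := no_out o'; rewrite o'_tail andbT leNgt => ->.
move=> S_le0; rewrite addrC => /subr0_eq S_eq.
by move: o_pos; rewrite -S_eq ltNge S_le0.
Qed.

Lemma pos_arc_fst_inj z : {in [pred o | 0 < ioval z o] &, injective fst}.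
Proof.
move=> [e b] [e' b']; rewrite !inE /= => pos pos' eq_e; subst e'.
case: (b =P b') => [-> // | neq_b].
have rev_eq : (e, b') = orev (e, b) by rewrite /orev; case: b b' neq_b {pos pos'} => [] [].
by move: pos'; rewrite rev_eq ioval_orev oppr_gt0 => /(lt_trans pos); rewrite ltxx.
Qed.

Lemma iflow_pos_circuit z o0 : is_iflow z -> 0 < ioval z o0 ->
  exists2 s, is_circuit src tgt s & {in s, forall o, 0 < ioval z o}.
Proof.
move=> z_flow o0_pos.
(* Choosing a positive out-arc at every vertex defines a map [step] on V; a
   periodic orbit of [step] lifts to the required circuit. *)
pose good v o := (0 < ioval z o) && (otail src tgt o == v).
pose has_out v := [exists o, good v o].
pose arc v := odflt o0 [pick o | good v o].
pose step v := Defs.ohead src tgt (arc v).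
have arcP v : has_out v -> good v (arc v).
  by case/existsP=> o good_o; rewrite /arc; case: pickP => [//|/(_ o)]; rewrite good_o.
have has_out_step v : has_out v -> has_out (step v).
  move=> /arcP /andP[arc_pos _]; have [o o_pos o_tail] := iflow_out_arc z_flow arc_pos.
  by apply/existsP; exists o; rewrite /good o_pos o_tail eqxx.
have [n orbit_cycle] := exists_fcycle_orbit step (otail src tgt o0).
set y := iter n step _ in orbit_cycle.
have has_out_orbit : {in orbit step y, forall v, has_out v}.
  move=> _ /trajectP[i _ ->]; rewrite -iterD.
  elim: (i + n)%N => [|k IHk] /=; last exact: has_out_step.
  by apply/existsP; exists o0; rewrite /good o0_pos eqxx.
have arc_pos v : v \in orbit step y -> 0 < ioval z (arc v).
  by move/has_out_orbit/arcP/andP=> [].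
have tails_arc : map (otail src tgt) (map arc (orbit step y)) = orbit step y.
  rewrite -map_comp -[RHS]map_id; apply/eq_in_map => v /has_out_orbit/arcP.
  by case/andP=> _ /eqP.
have arcs_uniq : uniq (map arc (orbit step y)).
  by apply: (@map_uniq _ _ (otail src tgt)); rewrite tails_arc orbit_uniq.
exists (map arc (orbit step y)); last by move=> _ /mapP[v v_orbit ->]; exact: arc_pos.
apply/and4P; split.
- by case: (orbit step y) (in_orbit step y).
- rewrite map_inj_in_uniq // => o o' /mapP[v v_orbit ->] /mapP[v' v'_orbit ->].
  by apply: pos_arc_fst_inj; apply: arc_pos.
- by rewrite tails_arc orbit_uniq.
- rewrite cycle_map; apply: (@sub_in_cycle _ has_out (frel step)) _ _ orbit_cycle.
    move=> u _ u_out _ /eqP <-; rewrite /relpre /=.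
    by have /andP[_ /eqP ->] := arcP _ (has_out_step _ u_out).
  exact/allP.
Qed.

Lemma circuit_ichain_sqr s e :
  circuit_ichain s e * circuit_ichain s e = `|circuit_ichain s e|%:Z.
Proof. by rewrite /circuit_ichain ffunE; repeat case: ifP. Qed.

Lemma circuit_l1norm_gt0 s : is_circuit src tgt s -> (0 < l1norm (circuit_ichain s))%N.
Proof.
case/and4P; case: s => // o s _ _ _ _; rewrite /l1norm (bigD1 o.1) //= ltn_addr //.
by rewrite absz_gt0 ffunE; case: o => e [] /=; rewrite mem_head //; case: ifP.
Qed.

Lemma l1norm_conformal_circuit z s : {in s, forall o, 0 < ioval z o} ->
  l1norm z = (l1norm (circuit_ichain s) + l1norm (z - circuit_ichain s)%R)%N.
Proof.
move=> s_pos; rewrite /l1norm -big_split; apply: eq_bigr => e _ /=.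
rewrite !ffunE; case: ifP => [/s_pos|_]; last case: ifP => [/s_pos|_].
all: by rewrite /ioval /=; move: (z e) => a; lia.
Qed.

End IntegerChains.

Section VoronoiBound.
Variables (R : realFieldType) (V E : finType) (src tgt : E -> V).
Implicit Types (x y : chain R E) (z c : {ffun E -> int}).

Definition chain_of_ichain z : chain R E := [ffun e => (z e)%:~R].

Lemma oval_chain_of_ichain z o : oval (chain_of_ichain z) o = (ioval z o)%:~R.
Proof. by rewrite /oval /ioval ffunE; case: o.2; rewrite ?mulrNz. Qed.

Lemma chain_of_ichainD z c :
  chain_of_ichain (z + c) = chain_of_ichain z + chain_of_ichain c.
Proof. by apply/ffunP => e; rewrite !ffunE intrD. Qed.

Lemma chain_of_ichain0 : chain_of_ichain 0 = 0.
Proof. by apply/ffunP => e; rewrite !ffunE. Qed.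

Lemma iflow_int_flow z : is_iflow src tgt z -> is_int_flow src tgt (chain_of_ichain z).
Proof.
move=> z_flow; split; last by exists z => e; rewrite ffunE.
by move=> v; under eq_bigr do rewrite oval_chain_of_ichain; rewrite -rmorph_sum z_flow.
Qed.

Lemma circuit_chainE s : circuit_chain R s = chain_of_ichain (circuit_ichain s).
Proof. by apply/ffunP => e; rewrite !ffunE; repeat case: ifP. Qed.

Lemma qf_circuit s :
  qf (chain_of_ichain (circuit_ichain s)) = (l1norm (circuit_ichain s))%:R.
Proof.
rewrite /qf /inner /l1norm natr_sum; apply: eq_bigr => e _.
by rewrite ffunE -intrM circuit_ichain_sqr.
Qed.

Lemma innerDr x y y' : inner x (y + y') = inner x y + inner x y'.
Proof. by rewrite /inner -big_split; apply: eq_bigr => e _; rewrite ffunE mulrDr. Qed.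

Lemma inner0r x : inner x 0 = 0.
Proof. by rewrite /inner big1 // => e _; rewrite ffunE mulr0. Qed.

Lemma qfB x y : qf (x - y) = qf x - 2 * inner x y + qf y.
Proof.
rewrite /qf /inner mulr_sumr -sumrB -big_split; apply: eq_bigr => e _ /=.
by rewrite !ffunE; lra.
Qed.

Lemma voronoi_inner_int_flow x mu :
  voronoi src tgt x -> is_int_flow src tgt mu -> 2 * inner x mu <= qf mu.
Proof. by move=> [_ x_min] /x_min; rewrite qfB; lra. Qed.

Lemma voronoi_inner_circuit x s : voronoi src tgt x -> is_circuit src tgt s ->
  2 * inner x (chain_of_ichain (circuit_ichain s)) <= (l1norm (circuit_ichain s))%:R.
Proof.
move=> x_vor s_circ; rewrite -qf_circuit.
exact/voronoi_inner_int_flow/iflow_int_flow/circuit_iflow.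
Qed.

Lemma voronoi_inner_iflow x z : voronoi src tgt x -> is_iflow src tgt z ->
  2 * inner x (chain_of_ichain z) <= (l1norm z)%:R.
Proof.
move=> x_vor; have [n] := ubnP (l1norm z); elim: n z => // n IHn z lt_z_n z_flow.
have [e ze_neq0 | z_eq0] := pickP (fun e => z e != 0); last first.
  have -> : z = 0 by apply/ffunP => e; rewrite ffunE; apply/eqP/negbFE/z_eq0.
  by rewrite chain_of_ichain0 inner0r mulr0.
have o_pos : 0 < ioval z (e, 0 < z e).
  by rewrite /ioval /=; move: (z e) ze_neq0 => a; case: ifP; lia.
have [s s_circ s_pos] := iflow_pos_circuit z_flow o_pos.
have z_split := l1norm_conformal_circuit s_pos.
have s_gt0 := circuit_l1norm_gt0 s_circ.
rewrite -[z in chain_of_ichain z](subrK (circuit_ichain s)) chain_of_ichainD innerDr mulrDr.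
rewrite z_split natrD addrC lerD ?voronoi_inner_circuit //.
apply: IHn; last exact/is_iflowD/is_iflowN/circuit_iflow.
by move: lt_z_n s_gt0; rewrite z_split; move: (l1norm _) (l1norm _) => a b; lia.
Qed.

End VoronoiBound.

Theorem mainTheorem5 (R : realFieldType) (V E : finType) (src tgt : E -> V)
  (Gconn : connected_graph src tgt)
  (F : chain R E -> Prop) (HF : is_face src tgt F)
  (lam mu : chain R E) (Hlam : in_Xi1 src tgt lam) (Hmu : in_Xi1 src tgt mu)
  (Hne : lam <> mu)
  (Hsub : forall x, F x -> in_Hlam src tgt lam x /\ in_Hlam src tgt mu x) :
  ~ (exists o : oedge E, in_supp lam o /\ in_supp mu (orev o)).
Proof.
move=> [o [lam_o mu_o]].
have [[x Fx] [a [b [_ F_def]]]] := HF.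
have x_vor : voronoi src tgt x by have /F_def[] := Fx.
have [[_ lam_x] [_ mu_x]] := Hsub x Fx.
case: Hlam lam_x lam_o => s [s_circ ->]; case: Hmu mu_x mu_o => t [t_circ ->].
rewrite /in_supp !circuit_chainE !qf_circuit !oval_chain_of_ichain !ltr0z ioval_orev oppr_gt0.
move=> lam_x lam_o mu_x mu_o.
have opposite : circuit_ichain s o.1 * circuit_ichain t o.1 < 0.
  by rewrite -iovalM pmulr_rlt0.
have := voronoi_inner_iflow x_vor (is_iflowD (circuit_iflow s_circ) (circuit_iflow t_circ)).
rewrite chain_of_ichainD innerDr mulrDr lam_x mu_x -natrD ler_nat.
by have := l1norm_opposite opposite; lia.
Qed.
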